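(* For any connected graphs $G$ and $H$, $\gamma_P(G \Box H) \le \min\{\gamma(G)Z(H),\ \gamma(H)Z(G)\}$.
   Context: $\gamma(G)$ is the domination number (minimum size of $D\subseteq V(G)$ with $N[D]=V(G)$). Zero forcing: starting from an observed set $Z$, repeatedly any vertex that is the only unobserved neighbor of some observed vertex becomes observed; $Z(G)$ is the minimum size of a set that eventually observes all vertices. Power domination: for $S\subseteq V(G)$, first all vertices of $S$ and their neighbors are observed, then the zero forcing rule is applied repeatedly; $\gamma_P(G)$ is the minimum size of an $S$ that eventually observes all vertices. $G\Box H$ is the Cartesian product: vertex set $V(G)\times V(H)$, with $(g_1,h_1)\sim(g_2,h_2)$ iff ($g_1=g_2$ and $h_1h_2\in E(H)$) or ($h_1=h_2$ and $g_1g_2\in E(G)$). *)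

From mathcomp Require Import all_boot.
Set Implicit Arguments. Unset Strict Implicit. Unset Printing Implicit Defensive.

Definition simple_graph (T : finType) (e : rel T) : Prop :=
  symmetric e /\ irreflexive e.

Definition connected (T : finType) (e : rel T) : Prop :=
  0 < #|T| /\ forall x y : T, connect e x y.

Definition closed_nbhd (T : finType) (e : rel T) (D : {set T}) : {set T} :=
  D :|: [set y | [exists x in D, e x y]].

Definition dominating (T : finType) (e : rel T) (D : {set T}) : Prop :=
  closed_nbhd e D = setT.

Inductive zf_observed (T : finType) (e : rel T) (S : {set T}) : T -> Prop :=
  | zf_init x : x \in S -> zf_observed e S x
  | zf_force v w : zf_observed e S v -> e v w ->
      (forall u, e v u -> u <> w -> zf_observed e S u) ->
      zf_observed e S w.

Definition zero_forcing_set (T : finType) (e : rel T) (S : {set T}) : Prop :=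
  forall x, zf_observed e S x.

Definition power_dominating_set (T : finType) (e : rel T) (S : {set T}) : Prop :=
  forall x, zf_observed e (closed_nbhd e S) x.

(* Graph parameters as minima (they exist: setT works, as a minimum over
   a nonempty predicate on 'I_#|T|.+1). *)
Definition is_min_card (T : finType) (P : {set T} -> Prop) (k : nat) : Prop :=
  (exists S, P S /\ #|S| = k) /\ (forall S, P S -> k <= #|S|).

Definition domination_number (T : finType) (e : rel T) (k : nat) : Prop :=
  is_min_card (dominating e) k.
Definition zero_forcing_number (T : finType) (e : rel T) (k : nat) : Prop :=
  is_min_card (zero_forcing_set e) k.
Definition power_domination_number (T : finType) (e : rel T) (k : nat) : Prop :=
  is_min_card (power_dominating_set e) k.

Definition cart_prod (T1 T2 : finType) (e1 : rel T1) (e2 : rel T2) : rel (T1 * T2) :=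
  fun p q => ((p.1 == q.1) && e2 p.2 q.2) || ((p.2 == q.2) && e1 p.1 q.1).

From mathcomp Require Import all_boot.
Set Implicit Arguments.
Unset Strict Implicit.
Unset Printing Implicit Defensive.

(* If D dominates G and Z is a zero forcing set of H, then D x Z power
   dominates G □ H: its closed neighbourhood contains every fibre G x {z},
   z in Z, and a force u -> w in H lifts to the forces (g, u) -> (g, w),
   since the neighbours of (g, u) outside the H-fibre of g lie in the fibre
   G x {u}, already observed.  The other bound follows by the symmetry
   G □ H ≅ H □ G. *)

Section ZeroForcing.

Variables (T : finType) (e : rel T).

Lemma zf_observedS (A B : {set T}) x :
  A \subset B -> zf_observed e A x -> zf_observed e B x.
Proof.
move=> sAB; elim=> [y Ay | v w _ IHv evw _ IHo].
- by apply: zf_init; apply: (subsetP sAB).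
- by apply: (zf_force IHv evw) => u evu nuw; apply: IHo.
Qed.

Lemma power_dominating_setS (A B : {set T}) :
  A \subset B -> power_dominating_set e A -> power_dominating_set e B.
Proof.
move=> sAB pdA x; apply: zf_observedS (pdA x); apply/subsetP => y.
rewrite !inE => /orP[/(subsetP sAB) -> // | /existsP[z /andP[Az ezy]]].
by apply/orP; right; apply/existsP; exists z; rewrite (subsetP sAB).
Qed.

End ZeroForcing.

Section Isomorphism.

Variables (T T' : finType) (e : rel T) (e' : rel T') (f : T -> T') (g : T' -> T).
Hypothesis gK : cancel g f.
Hypothesis edge_f : forall x y, e' (f x) (f y) = e x y.

Lemma zf_observed_iso (S : {set T}) x :
  zf_observed e S x -> zf_observed e' (f @: S) (f x).
Proof.
elim=> [y Sy | v w _ IHv evw _ IHo]; first by apply/zf_init/imset_f.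
apply: (zf_force IHv); first by rewrite edge_f.
move=> u; rewrite -[u]gK edge_f => evu nuw; apply: IHo => // ugw.
by apply: nuw; rewrite ugw.
Qed.

Lemma power_dominating_set_iso (S : {set T}) :
  power_dominating_set e S -> power_dominating_set e' (f @: S).
Proof.
move=> pdS y; rewrite -[y]gK; apply: zf_observedS (zf_observed_iso (pdS _)).
apply/subsetP => _ /imsetP[x + ->]; rewrite !inE.
case/orP=> [Sx | /existsP[z /andP[Sz ezx]]]; first by rewrite imset_f.
by apply/orP; right; apply/existsP; exists (f z); rewrite imset_f ?edge_f.
Qed.

End Isomorphism.

Section CartesianProduct.

Variables (T1 T2 : finType) (e1 : rel T1) (e2 : rel T2).

Lemma zf_observed_cart_fibres (Z : {set T2}) y :
  zf_observed e2 Z y ->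
  forall x, zf_observed (cart_prod e1 e2) (setX [set: T1] Z) (x, y).
Proof.
elim=> [z Zz | v w _ IHv evw _ IHo] x.
- by apply: zf_init; rewrite !inE.
- apply: (zf_force (IHv x)); first by rewrite /cart_prod /= eqxx evw.
  move=> [u1 u2]; rewrite /cart_prod /=.
  case/orP=> [/andP[/eqP <- evu] nuw | /andP[/eqP <- _] _]; last exact: IHv.
  by apply: IHo => // uw; apply: nuw; rewrite uw.
Qed.

Lemma closed_nbhd_cart_setX (D : {set T1}) (Z : {set T2}) :
  dominating e1 D ->
  setX [set: T1] Z \subset closed_nbhd (cart_prod e1 e2) (setX D Z).
Proof.
move=> domD; apply/subsetP => -[x z]; rewrite !inE /= => Zz.
have : x \in closed_nbhd e1 D by rewrite domD inE.
rewrite !inE => /orP[-> | /existsP[d /andP[Dd edx]]]; first by rewrite Zz.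
apply/orP; right; apply/existsP; exists (d, z).
by rewrite !inE Dd Zz /cart_prod /= eqxx edx orbT.
Qed.

Lemma power_dominating_setX (D : {set T1}) (Z : {set T2}) :
  dominating e1 D -> zero_forcing_set e2 Z ->
  power_dominating_set (cart_prod e1 e2) (setX D Z).
Proof.
move=> domD zfZ [x y].
exact: zf_observedS (closed_nbhd_cart_setX Z domD) (zf_observed_cart_fibres (zfZ y) x).
Qed.

Lemma cart_prodC (p q : T2 * T1) :
  cart_prod e1 e2 (p.2, p.1) (q.2, q.1) = cart_prod e2 e1 p q.
Proof. by rewrite /cart_prod orbC. Qed.

End CartesianProduct.

Lemma swapK (A B : Type) : cancel (fun p : A * B => (p.2, p.1)) (fun p => (p.2, p.1)).
Proof. by case. Qed.

Theorem lemma3p8 (T1 T2 : finType) (e1 : rel T1) (e2 : rel T2)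
  (gG zG gH zH gP : nat) :
  simple_graph e1 -> simple_graph e2 ->
  connected e1 -> connected e2 ->
  domination_number e1 gG -> zero_forcing_number e1 zG ->
  domination_number e2 gH -> zero_forcing_number e2 zH ->
  power_domination_number (cart_prod e1 e2) gP ->
  gP <= minn (gG * zH) (gH * zG).
Proof.
move=> _ _ _ _ [[D1 [domD1 <-]] _] [[Z1 [zfZ1 <-]] _] [[D2 [domD2 <-]] _]
  [[Z2 [zfZ2 <-]] _] [_ gP_min].
have pdX12 := power_dominating_setX domD1 zfZ2.
have pdX21 := power_dominating_setX domD2 zfZ1.
have pd_swap := power_dominating_set_iso (@swapK _ _) (@cart_prodC _ _ e1 e2) pdX21.
rewrite leq_min -!cardsX gP_min //=.
by rewrite -(card_imset _ (can_inj (@swapK T2 T1))) gP_min.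
Qed.
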